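(* Let $\mathcal{A}$ be an alternative $W^{*}$-factor, $\mathcal{B}$ an alternative complex $\ast$-algebra, and $\Phi:\mathcal{A}\to\mathcal{B}$ a bijection. Let $p_{1}\in\mathcal{A}$ be a projection with $p_{1}\neq 1_{\mathcal{A}}$, $p_{2}=1_{\mathcal{A}}-p_{1}$, and $\mathcal{A}_{ij}=p_{i}\mathcal{A}p_{j}$. Let $a_{12},b_{12}\in\mathcal{A}_{12}$ and $c_{21},d_{21}\in\mathcal{A}_{21}$. If $\Phi$ preserves product $ab+ba^{*}$, then (i) $\Phi(a_{12}b_{12}+a_{12}^{*})=\Phi(a_{12}b_{12})+\Phi(a_{12}^{*})$ and (ii) $\Phi(c_{21}d_{21}+c_{21}^{*})=\Phi(c_{21}d_{21})+\Phi(c_{21}^{*})$. If $\Phi$ preserves product $ab-ba^{*}$, then (i) $\Phi(a_{12}b_{12}-a_{12}^{*})=\Phi(a_{12}b_{12})+\Phi(-a_{12}^{*})$ and (ii) $\Phi(c_{21}d_{21}-c_{21}^{*})=\Phi(c_{21}d_{21})+\Phi(-c_{21}^{*})$.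
   Context: An alternative $W^{*}$-factor is a prime alternative $C^{*}$-algebra (complete normed alternative complex $\ast$-algebra with $\|a^{*}a\|=\|a\|^{2}$) that is a dual Banach space; it is unital. A projection is a nonzero self-adjoint idempotent. $\mathcal{A}_{ij}$ are the Peirce components with respect to $p_{1}$. $\Phi$ preserves product $ab+ba^{*}$ (resp. $ab-ba^{*}$) if $\Phi(ab+ba^{*})=\Phi(a)\Phi(b)+\Phi(b)\Phi(a)^{*}$ (resp. $\Phi(ab-ba^{*})=\Phi(a)\Phi(b)-\Phi(b)\Phi(a)^{*}$) for all $a,b\in\mathcal{A}$. *)

From HB Require Import structures.
From mathcomp Require Import all_boot all_order all_algebra.
From mathcomp Require Import complex.
From mathcomp Require Import all_classical all_reals all_analysis.
Set Implicit Arguments. Unset Strict Implicit. Unset Printing Implicit Defensive.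
Import Order.TTheory GRing.Theory Num.Theory.
Import numFieldTopology.Exports numFieldNormedType.Exports.
Local Open Scope ring_scope.
Local Open Scope complex_scope.

Record altStarAlg (R : realType) (V : lmodType R[i]) := AltStarAlg {
  amul : V -> V -> V;
  astar : V -> V;
  amulDl : forall (k : R[i]) (x y z : V),
      amul (k *: x + y) z = k *: amul x z + amul y z;
  amulDr : forall (k : R[i]) (x y z : V),
      amul x (k *: y + z) = k *: amul x y + amul x z;
  amul_altl : forall x y : V, amul (amul x x) y = amul x (amul x y);
  amul_altr : forall x y : V, amul (amul y x) x = amul y (amul x x);
  astarD : forall x y : V, astar (x + y) = astar x + astar y;
  astarZ : forall (k : R[i]) (x : V), astar (k *: x) = k^* *: astar x;
  astarK : forall x : V, astar (astar x) = x;
  astarM : forall x y : V, astar (amul x y) = amul (astar y) (astar x)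
}.

Section Defs.
Variables (R : realType).

Definition is_ideal (V : lmodType R[i]) (A : altStarAlg V) (I : set V) :=
  [/\ I 0,
      (forall x y, I x -> I y -> I (x + y)),
      (forall (k : R[i]) x, I x -> I (k *: x)),
      (forall a x, I x -> I (amul A a x)) &
      (forall a x, I x -> I (amul A x a))].

Definition is_prime (V : lmodType R[i]) (A : altStarAlg V) :=
  forall I J : set V, is_ideal A I -> is_ideal A J ->
    (forall x y, I x -> J y -> amul A x y = 0) ->
    (forall x, I x -> x = 0) \/ (forall y, J y -> y = 0).

(** V is (isometrically isomorphic to) the dual of a normed space X:
    there is a linear bijection from V onto the continuous linear
    functionals on X, which is isometric for the operator norm. *)
Definition is_dual_banach (V : normedModType R[i]) :=
  exists (X : normedModType R[i]) (phi : V -> X -> R[i]),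
    [/\ (forall v (k : R[i]) x y, phi v (k *: x + y) = k * phi v x + phi v y),
        (forall v, continuous (phi v : X -> (R[i] : numFieldType))),
        (forall (k : R[i]) v w, phi (k *: v + w) = (fun x => k * phi v x + phi w x)),
        injective phi &
        (forall f : X -> R[i],
            (forall (k : R[i]) x y, f (k *: x + y) = k * f x + f y) ->
            continuous (f : X -> (R[i] : numFieldType)) -> exists v, phi v = f)] /\
        (forall v, (forall x, `|x| <= 1 -> `|phi v x| <= `|v|) /\
                   (forall e : R[i], 0 < e ->
                      exists x, `|x| <= 1 /\ `|v| - e < `|phi v x|)).

End Defs.

(** An alternative W*-factor: a prime alternative C*-algebra (complete normed
    alternative complex *-algebra with the C*-identity) that is a dual Banach
    space. *)
Record altWfactor (R : realType) (V : completeNormedModType R[i]) := AltWfactor {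
  wf_alg :> altStarAlg V;
  wf_one : V;
  wf_one_neq0 : wf_one <> 0;
  wf_mul1l : forall x, amul wf_alg wf_one x = x;
  wf_mul1r : forall x, amul wf_alg x wf_one = x;
  wf_normM : forall x y : V, `|amul wf_alg x y| <= `|x| * `|y|;
  wf_cstar : forall x : V, `|amul wf_alg (astar wf_alg x) x| = `|x| ^+ 2;
  wf_prime : is_prime wf_alg;
  wf_dual : is_dual_banach V
}.

Definition is_projection (R : realType) (V : lmodType R[i]) (A : altStarAlg V) (p : V) :=
  [/\ p <> 0, astar A p = p & amul A p p = p].

Definition peirce (R : realType) (V : lmodType R[i]) (A : altStarAlg V) (p q : V) : set V :=
  [set x | exists a, x = amul A (amul A p a) q].

Definition preserves_jplus (R : realType) (V W : lmodType R[i])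
  (A : altStarAlg V) (B : altStarAlg W) (Phi : V -> W) :=
  forall a b, Phi (amul A a b + amul A b (astar A a)) =
              amul B (Phi a) (Phi b) + amul B (Phi b) (astar B (Phi a)).

Definition preserves_jminus (R : realType) (V W : lmodType R[i])
  (A : altStarAlg V) (B : altStarAlg W) (Phi : V -> W) :=
  forall a b, Phi (amul A a b - amul A b (astar A a)) =
              amul B (Phi a) (Phi b) - amul B (Phi b) (astar B (Phi a)).

From HB Require Import structures.
From mathcomp Require Import all_boot all_order all_algebra.
From mathcomp Require Import complex.
From mathcomp Require Import all_classical all_reals all_analysis.
From mathcomp Require Import ssrAC.
Import Order.TTheory GRing.Theory Num.Theory.
Local Open Scope ring_scope.
Local Open Scope complex_scope.
Set Implicit Arguments. Unset Strict Implicit.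

(* Both products are instances of the Jordan-type product
     a o b = a b + s b a^*,   s = 1 or s = -1,
   and we work with a bijection Phi preserving it.  With a scalar c != 0
   such that s c^* = c (c = 1, resp. c = i), the operator y |-> (c f) o y is
   c (f y + y f) for self-adjoint f.
   1. Peirce calculus in a unital alternative *-algebra: for a projection e,
      A_lr (l, r : bool) is the set of x with e x = l x and x e = r x; every
      element splits into four such components.
   2. Phi(sum_ij x_ij) = sum_ij Phi(x_ij) for x_ij in A_ij: take S with Phi S
      equal to the right side and read off the components of S with
      operators built from o, which commute with Phi and kill all Peirce
      components but one.
   3. For a, b in A12, comparing two splittings of Phi(a o (b + (1 - e)))
      gives Phi(ab + s a^* ) = Phi(ab) + Phi(s a^* ); applied to p1 and to 1 - p1
      this is the claim. *)

Section AlgebraIdentities.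
Variables (R : realType) (U : lmodType R[i]) (A : altStarAlg U).
Local Notation m := (amul A).
Local Notation st := (astar A).

Lemma amul_addl x y z : m (x + y) z = m x z + m y z.
Proof. by have := amulDl A 1 x y z; rewrite !scale1r. Qed.
Lemma amul_addr x y z : m z (x + y) = m z x + m z y.
Proof. by have := amulDr A 1 z x y; rewrite !scale1r. Qed.
Lemma amul0l z : m 0 z = 0.
Proof. by apply/(addrI (m 0 z)); rewrite -amul_addl !addr0. Qed.
Lemma amul0r z : m z 0 = 0.
Proof. by apply/(addrI (m z 0)); rewrite -amul_addr !addr0. Qed.
Lemma amul_scalel k x z : m (k *: x) z = k *: m x z.
Proof. by have := amulDl A k x 0 z; rewrite addr0 amul0l addr0. Qed.
Lemma amul_scaler k x z : m z (k *: x) = k *: m z x.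
Proof. by have := amulDr A k z x 0; rewrite addr0 amul0r addr0. Qed.
Lemma amul_subl x y z : m (x - y) z = m x z - m y z.
Proof. by rewrite amul_addl -scaleN1r amul_scalel scaleN1r. Qed.
Lemma amul_subr x y z : m z (x - y) = m z x - m z y.
Proof. by rewrite amul_addr -scaleN1r amul_scaler scaleN1r. Qed.
Lemma amul_mulrnl x z (n : nat) : m (x *+ n) z = m x z *+ n.
Proof. by elim: n => [|n IH]; rewrite ?amul0l // !mulrS amul_addl IH. Qed.
Lemma amul_mulrnr x z (n : nat) : m z (x *+ n) = m z x *+ n.
Proof. by elim: n => [|n IH]; rewrite ?amul0r // !mulrS amul_addr IH. Qed.

Lemma astar0 : st 0 = 0.
Proof. by apply/(addrI (st 0)); rewrite -astarD !addr0. Qed.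
Lemma astarB x y : st (x - y) = st x - st y.
Proof. by rewrite astarD; congr (_ + _); apply/(addrI (st y)); rewrite -astarD !subrr astar0. Qed.
Lemma astar_mulrn x (n : nat) : st (x *+ n) = st x *+ n.
Proof. by elim: n => [|n IH]; rewrite ?astar0 // !mulrS astarD IH. Qed.

Lemma amul_altl_lin x z y : m (m x z) y + m (m z x) y = m x (m z y) + m z (m x y).
Proof.
have h := amul_altl A (x + z) y.
rewrite !(amul_addl, amul_addr) !amul_altl in h.
by move: h; rewrite !addrA => /addIr; rewrite -!addrA => /addrI.
Qed.

Lemma amul_altr_lin y x z : m (m y x) z + m (m y z) x = m y (m x z) + m y (m z x).
Proof.
have h := amul_altr A (x + z) y.
rewrite !(amul_addl, amul_addr) !amul_altr in h.
by rewrite addrC; move: h; rewrite !addrA => /addIr; rewrite -!addrA => /addrI.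
Qed.

End AlgebraIdentities.

(* x lies in the Peirce component A_lr of e (with true = 1, false = 2). *)
Definition peirce_at (R : realType) (U : lmodType R[i]) (A : altStarAlg U)
    (e : U) (l r : bool) (x : U) :=
  amul A e x = x *+ l /\ amul A x e = x *+ r.

Section PeirceComponents.
Variables (R : realType) (U : lmodType R[i]) (A : altStarAlg U).
Variables (one : U) (mul1x : forall x, amul A one x = x)
          (mulx1 : forall x, amul A x one = x).
Local Notation m := (amul A).
Local Notation st := (astar A).

Lemma astar_one : st one = one.
Proof.
have mulst1x y : m (st one) y = y by rewrite -[y](astarK A) -astarM mulx1.
by rewrite -[RHS]mulst1x mulx1.
Qed.

Lemma amul_complx e x : m (one - e) x = x - m e x.
Proof. by rewrite amul_subl mul1x. Qed.
Lemma amul_xcompl e x : m x (one - e) = x - m x e.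
Proof. by rewrite amul_subr mulx1. Qed.

Lemma peirce_atD e l r x y :
  peirce_at A e l r x -> peirce_at A e l r y -> peirce_at A e l r (x + y).
Proof.
by case=> ex xe [ey ye]; split; rewrite ?amul_addl ?amul_addr ?ex ?ey ?xe ?ye mulrnDl.
Qed.

Lemma peirce_atZ e l r k x : peirce_at A e l r x -> peirce_at A e l r (k *: x).
Proof. by case=> ex xe; split; rewrite ?amul_scalel ?amul_scaler ?ex ?xe scalerMnr. Qed.

Lemma peirce_atMn e l r n x : peirce_at A e l r x -> peirce_at A e l r (x *+ n).
Proof.
by case=> ex xe; split; rewrite ?amul_mulrnl ?amul_mulrnr ?ex ?xe -!mulrnA mulnC.
Qed.

Variables (e : U) (st_e : st e = e) (ee : m e e = e).

Lemma proj_mulL x : m e (m e x) = m e x.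
Proof. by rewrite -amul_altl ee. Qed.
Lemma proj_mulR x : m (m x e) e = m x e.
Proof. by rewrite amul_altr ee. Qed.
Lemma proj_flex x : m e (m x e) = m (m e x) e.
Proof.
have h := amul_altl_lin A e x e.
by rewrite amul_altr ee in h; apply/esym/(addIr (m x e)).
Qed.

Lemma peirce_mul_offdiag x y : peirce_at A e true false x ->
  peirce_at A e true false y -> peirce_at A e false true (m x y).
Proof.
case=> ex xe [ey ye]; split => /=.
- have h := amul_altl_lin A e x y.
  rewrite ex xe ey amul0l addr0 /= mulr1n in h.
  by rewrite mulr0n; apply/(addIr (m x y)); rewrite add0r.
- have h := amul_altr_lin A x y e.
  by rewrite xe ey ye /= mulr0n amul0l amul0r addr0 add0r in h.
Qed.

Lemma peirce_mul_offdiag_rev x y : peirce_at A e true false x ->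
  peirce_at A e false true y -> peirce_at A e true true (m x y).
Proof.
case=> ex xe [ey ye]; split => /=.
- have h := amul_altl_lin A e x y.
  by rewrite ex xe ey /= mulr1n mulr0n amul0l amul0r !addr0 in h.
- have h := amul_altr_lin A x y e.
  by rewrite xe ey ye /= mulr1n mulr0n amul0l amul0r !addr0 in h.
Qed.

Lemma peirce_at_jordan l r x : peirce_at A e l r x -> m e x + m x e = x *+ (l + r).
Proof. by case=> -> ->; rewrite mulrnDr. Qed.

Lemma peirce_at_star l r x : peirce_at A e l r x -> peirce_at A e r l (st x).
Proof. by case=> ex xe; split; rewrite -{1}st_e -astarM ?ex ?xe astar_mulrn. Qed.

Lemma peirce_at_compl l r x :
  peirce_at A e l r x -> peirce_at A (one - e) (~~ l) (~~ r) x.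
Proof.
case=> ex xe; split; rewrite ?amul_complx ?amul_xcompl ?ex ?xe.
- by case: l {ex}; rewrite ?subrr ?subr0.
- by case: r {xe}; rewrite ?subrr ?subr0.
Qed.

Lemma astar_compl : st (one - e) = one - e.
Proof. by rewrite astarB astar_one st_e. Qed.
Lemma compl_idem : m (one - e) (one - e) = one - e.
Proof. by rewrite amul_complx amul_xcompl ee subrr subr0. Qed.

Lemma peirce_at_diag S : peirce_at A e true true (m (m e S) e).
Proof. by split; rewrite /= ?proj_mulR // proj_flex proj_mulL. Qed.

Lemma peirce_at_offdiag x : peirce A e (one - e) x -> peirce_at A e true false x.
Proof.
case=> a ->; split; rewrite amul_xcompl ?amul_subr ?amul_subl /=.
- by rewrite mulr1n proj_mulL proj_flex proj_mulL.
- by rewrite mulr0n proj_mulR subrr.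
Qed.

End PeirceComponents.

Definition psum (G : zmodType) (f : bool -> bool -> G) :=
  f true true + f true false + f false true + f false false.

Section PeirceSums.
Variable G : zmodType.
Implicit Types f g : bool -> bool -> G.

Lemma eq_psum f g : (forall l r, f l r = g l r) -> psum f = psum g.
Proof. by move=> fg; rewrite /psum !fg. Qed.

Lemma psum_morph (H : zmodType) (op : G -> H) f :
  {morph op : x y / x + y} -> op (psum f) = psum (fun l r => op (f l r)).
Proof. by move=> opD; rewrite /psum !opD. Qed.

Lemma psum_flip f : psum (fun l r => f (~~ l) (~~ r)) = psum f.
Proof. by rewrite /psum /= (ACl (4*3*2*1)). Qed.

Lemma psum_single f l0 r0 :
  (forall l r, (l, r) != (l0, r0) -> f l r = 0) -> psum f = f l0 r0.
Proof.
rewrite /psum; case: l0; case: r0 => f0.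
- by rewrite (f0 true false) // (f0 false true) // (f0 false false) // !addr0.
- by rewrite (f0 true true) // (f0 false true) // (f0 false false) // add0r !addr0.
- by rewrite (f0 true true) // (f0 true false) // (f0 false false) // !add0r addr0.
- by rewrite (f0 true true) // (f0 true false) // (f0 false true) // !add0r.
Qed.

End PeirceSums.

Section PeirceSplitting.
Variables (R : realType) (U : lmodType R[i]) (A : altStarAlg U).
Variables (one : U) (mul1x : forall x, amul A one x = x)
          (mulx1 : forall x, amul A x one = x).
Variables (e : U) (ee : amul A e e = e).
Local Notation m := (amul A).

Lemma peirce_at_compl_inv l r x :
  peirce_at A (one - e) l r x -> peirce_at A e (~~ l) (~~ r) x.
Proof. by move/(peirce_at_compl mul1x mulx1); rewrite subKr. Qed.

Lemma peirce_decomp S : exists y : bool -> bool -> U,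
  (forall l r, peirce_at A e l r (y l r)) /\ S = psum y.
Proof.
pose proj (b : bool) := if b then e else one - e.
exists (fun l r => m (m (proj l) S) (proj r)); split.
- have ee' := compl_idem mul1x mulx1 ee.
  case; case => /=.
  + exact: peirce_at_diag.
  + by apply: peirce_at_offdiag; [exact: mulx1|exact: ee|exists S].
  + apply: (@peirce_at_compl_inv true false).
    by apply: (peirce_at_offdiag mulx1 ee'); exists S; rewrite subKr.
  + exact: (@peirce_at_compl_inv true true _ (peirce_at_diag ee' S)).
- rewrite /psum /= -addrA -!amul_addr !subrKC !mulx1 -amul_addl subrKC.
  by rewrite mul1x.
Qed.

End PeirceSplitting.

Definition jprod (R : realType) (U : lmodType R[i]) (A : altStarAlg U)
    (s : R[i]) (a b : U) :=
  amul A a b + s *: amul A b (astar A a).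

Section JordanProduct.
Variables (R : realType) (U : lmodType R[i]) (A : altStarAlg U) (s : R[i]).

Lemma jprodDr a : {morph jprod A s a : x y / x + y}.
Proof. by move=> x y; rewrite /jprod amul_addr amul_addl scalerDr addrACA. Qed.

Lemma jprodDl b : {morph jprod A s ^~ b : x y / x + y}.
Proof.
by move=> x y; rewrite /jprod amul_addl astarD amul_addr scalerDr addrACA.
Qed.

Lemma jprod0r a : jprod A s a 0 = 0.
Proof. by rewrite /jprod amul0r amul0l scaler0 addr0. Qed.

Lemma jprod0l b : jprod A s 0 b = 0.
Proof. by rewrite /jprod astar0 amul0r amul0l scaler0 addr0. Qed.

End JordanProduct.

Lemma mulrnI_lmod (K : numFieldType) (V : lmodType K) n :
  (0 < n)%N -> injective (fun v : V => v *+ n).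
Proof.
move=> n_gt0 u v /=; rewrite -!scaler_nat; apply: scalerI.
by rewrite pnatr_eq0 -lt0n.
Qed.

Section PreservingMap.
Variables (R : realType) (U : lmodType R[i]) (A : altStarAlg U).
Variables (one : U) (mul1x : forall x, amul A one x = x)
          (mulx1 : forall x, amul A x one = x).
Variables (W : lmodType R[i]) (B : altStarAlg W) (Phi : U -> W).
Hypotheses (Phi_inj : injective Phi) (Phi_surj : forall w, exists x, Phi x = w).
Variables (s c : R[i]) (sc : s * c^* = c) (c_neq0 : c != 0).
Hypothesis Phi_jprod : forall a b, Phi (jprod A s a b) = jprod B s (Phi a) (Phi b).
Local Notation m := (amul A).
Local Notation st := (astar A).

(* Phi (0 o z) = Phi 0 o 0 for a preimage z of 0. *)
Lemma Phi0 : Phi 0 = 0.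
Proof.
have [z Phiz] := Phi_surj 0.
by have := Phi_jprod 0 z; rewrite jprod0l Phiz jprod0r.
Qed.

Definition compatible (op : U -> U) := forall S (x : bool -> bool -> U),
  Phi S = psum (fun l r => Phi (x l r)) ->
  Phi (op S) = psum (fun l r => Phi (op (x l r))).

(* Left and right multiplications for o are compatible, as Phi preserves o
   and o is biadditive. *)
Lemma jprodl_compatible a : compatible (jprod A s a).
Proof.
move=> S x PhiS; rewrite Phi_jprod PhiS (psum_morph _ (jprodDr B s (Phi a))).
by apply: eq_psum => l r; rewrite Phi_jprod.
Qed.

Lemma jprodr_compatible b : compatible (jprod A s ^~ b).
Proof.
move=> S x PhiS; rewrite Phi_jprod PhiS (psum_morph _ (jprodDl B s (Phi b))).
by apply: eq_psum => l r; rewrite Phi_jprod.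
Qed.

Lemma compatible_comp f g : compatible f -> compatible g -> compatible (g \o f).
Proof. by move=> cf cg S x /cf /cg. Qed.

(* A compatible additive operator that annihilates all Peirce components but
   one, and is injective on that one, lets us read off that component. *)
Lemma component_unique (C : bool -> bool -> U -> Prop) (op : U -> U) l0 r0 :
  compatible op -> {morph op : x y / x + y} ->
  (forall l r y, (l, r) != (l0, r0) -> C l r y -> op y = 0) ->
  (forall y y', C l0 r0 y -> C l0 r0 y' -> op y = op y' -> y = y') ->
  forall y x, (forall l r, C l r (y l r)) -> (forall l r, C l r (x l r)) ->
  Phi (psum y) = psum (fun l r => Phi (x l r)) -> y l0 r0 = x l0 r0.
Proof.
move=> op_comp opD op_kill op_inj y x Cy Cx /op_comp.
rewrite (psum_morph _ opD) (@psum_single _ (fun l r => op (y l r)) l0 r0);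
  last by move=> l r lr; apply: op_kill lr (Cy l r).
rewrite (@psum_single _ (fun l r => Phi (op (x l r))) l0 r0);
  last by move=> l r lr; rewrite (op_kill _ _ _ lr (Cx l r)) Phi0.
by move/Phi_inj; apply: op_inj.
Qed.

Lemma jprod_selfadj f z : st f = f -> jprod A s (c *: f) z = c *: (m f z + m z f).
Proof. by move=> st_f; rewrite /jprod astarZ st_f amul_scalel amul_scaler scalerA sc scalerDr. Qed.

Section TestOperators.
Variables (e : U) (st_e : st e = e).
Local Notation Le := (jprod A s (c *: e)).
Local Notation Ke := (jprod A s (c *: (e - (one - e)))).

(* The two test operators  y |-> (c e) o (y o (1 - e))  and
   y |-> (c e) o ((c (2e - 1)) o y)  isolate the components A12 and A11. *)
Lemma Le_peirce l r y : peirce_at A e l r y -> Le y = c *: y *+ (l + r).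
Proof. by move=> hy; rewrite jprod_selfadj // (peirce_at_jordan hy) scalerMnr. Qed.

Lemma offdiag_test l r y : peirce_at A e l r y ->
  Le (jprod A s y (one - e)) = c *: (y + s *: st y) *+ (l && ~~ r).
Proof.
move=> hy; have [_ y_compl] := peirce_at_compl mul1x mulx1 hy.
have hy' := peirce_atZ s (peirce_at_star st_e hy).
have [compl_y' _] := peirce_at_compl mul1x mulx1 (peirce_at_star st_e hy).
rewrite [jprod A s y _]/jprod y_compl compl_y' -scalerMnr -mulrnDl.
case: r hy hy' {y_compl compl_y'} => hy hy'; first by rewrite jprod0r andbF.
rewrite mulr1n jprodDr (Le_peirce hy) (Le_peirce hy').
by case: l {hy hy'}; rewrite /= scalerDr ?(addn0, add0n, mulr1n, mulr0n, addr0).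
Qed.

Lemma diag_test l r y : peirce_at A e l r y ->
  Le (Ke y) = (c *: (c *: (y *+ 2))) *+ 2 *+ (l && r).
Proof.
move=> hy; have hy_compl := peirce_at_compl mul1x mulx1 hy.
have st_K : st (e - (one - e)) = e - (one - e).
  by rewrite astarB (astar_compl mulx1 st_e) st_e.
rewrite [jprod _ _ _ y]jprod_selfadj // amul_subl amul_subr addrACA -opprD.
rewrite (peirce_at_jordan hy) (peirce_at_jordan hy_compl).
case: l r hy {hy_compl} => [] [] hy /=.
- by rewrite mulr0n subr0 (Le_peirce (peirce_atZ c (peirce_atMn 2 hy))) mulr1n.
- by rewrite subrr scaler0 jprod0r.
- by rewrite subrr scaler0 jprod0r.
- rewrite !mulr0n sub0r -scaleN1r scalerA.
  by rewrite (Le_peirce (peirce_atZ _ (peirce_atMn 2 hy))) mulr0n.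
Qed.

Lemma peirce_components_unique y x :
  (forall l r, peirce_at A e l r (y l r)) ->
  (forall l r, peirce_at A e l r (x l r)) ->
  Phi (psum y) = psum (fun l r => Phi (x l r)) ->
  y true false = x true false /\ y true true = x true true.
Proof.
move=> Py Px PhiS; split.
- apply: (component_unique (op := Le \o jprod A s ^~ (one - e))) Py Px PhiS.
  + exact: compatible_comp (jprodr_compatible _) (jprodl_compatible _).
  + by move=> u v /=; rewrite jprodDl jprodDr.
  + move=> l r z lr hz; rewrite /= (offdiag_test hz).
    by case: l r lr {hz} => [] [].
  + move=> u v hu hv; rewrite /= (offdiag_test hu) (offdiag_test hv) /= !mulr1n.
    move/(scalerI c_neq0)/(congr1 (m e)); rewrite !amul_addr !amul_scaler.
    have [-> _] := hu; have [-> _] := hv.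
    by have [-> _] := peirce_at_star st_e hu; have [-> _] := peirce_at_star st_e hv; rewrite /= !mulr0n !scaler0 !addr0.
- apply: (component_unique (op := Le \o Ke)) Py Px PhiS.
  + exact: compatible_comp (jprodl_compatible _) (jprodl_compatible _).
  + by move=> u v /=; rewrite !jprodDr.
  + move=> l r z lr hz; rewrite /= (diag_test hz).
    by case: l r lr {hz} => [] [].
  + move=> u v hu hv; rewrite /= (diag_test hu) (diag_test hv) /= !mulr1n.
    by move/(mulrnI_lmod (n := 2) isT)/(scalerI c_neq0)/(scalerI c_neq0)/(mulrnI_lmod (n := 2) isT).
Qed.

End TestOperators.

(* Phi is additive on every Peirce decomposition: reading off the components
   of a preimage of  sum_ij Phi x_ij  with respect to e and to 1 - e. *)
Lemma peirce_additive e (st_e : st e = e) (ee : m e e = e) x :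
  (forall l r, peirce_at A e l r (x l r)) ->
  Phi (psum x) = psum (fun l r => Phi (x l r)).
Proof.
move=> Px; have [S PhiS] := Phi_surj (psum (fun l r => Phi (x l r))).
have [y [Py defS]] := peirce_decomp mul1x mulx1 ee S; rewrite {}defS in PhiS.
have [y12 y11] := peirce_components_unique st_e Py Px PhiS.
pose flip (f : bool -> bool -> U) l r := f (~~ l) (~~ r).
have compl_flip f : (forall l r, peirce_at A e l r (f l r)) ->
    forall l r, peirce_at A (one - e) l r (flip f l r).
  by move=> Pf l r; have := peirce_at_compl mul1x mulx1 (Pf (~~ l) (~~ r)); rewrite !negbK.
have PhiS' : Phi (psum (flip y)) = psum (fun l r => Phi (flip x l r)).
  by rewrite psum_flip PhiS (psum_flip (fun l r => Phi (x l r))).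
have [y21 y22] := peirce_components_unique (astar_compl mulx1 st_e)
  (compl_flip _ Py) (compl_flip _ Px) PhiS'.
by rewrite -PhiS /psum y11 y12; rewrite /flip /= in y21 y22; rewrite y21 y22.
Qed.

Lemma peirce_additive4 e (st_e : st e = e) (ee : m e e = e) x11 x12 x21 x22 :
  peirce_at A e true true x11 -> peirce_at A e true false x12 ->
  peirce_at A e false true x21 -> peirce_at A e false false x22 ->
  Phi (x11 + x12 + x21 + x22) = Phi x11 + Phi x12 + Phi x21 + Phi x22.
Proof.
move=> P11 P12 P21 P22.
pose x l r := if l then (if r then x11 else x12) else (if r then x21 else x22).
by apply: (peirce_additive st_e ee (x := x)); case; case.
Qed.

(* The key identity: for a, b in A12, the product ab + s a^* (with both
   summands in A21) is split by Phi, by comparing two ways of decomposing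
   Phi (a o (b + (1 - e))). *)
Lemma jprod_offdiag_additive e (st_e : st e = e) (ee : m e e = e) a b :
  peirce_at A e true false a -> peirce_at A e true false b ->
  Phi (m a b + s *: st a) = Phi (m a b) + Phi (s *: st a).
Proof.
move=> Pa Pb; have add4 := peirce_additive4 st_e ee.
have P0 l r : peirce_at A e l r 0 by split; rewrite ?amul0l ?amul0r mul0rn.
have Pab := peirce_mul_offdiag Pa Pb.
have Pas := peirce_at_star st_e Pa.
have Psas := peirce_atZ s Pas.
have Psbas := peirce_atZ s (peirce_mul_offdiag_rev Pb Pas).
have Pcompl : peirce_at A e false false (one - e).
  by split; rewrite ?(amul_complx mul1x) ?(amul_xcompl mulx1) ee subrr.
have jprod_a_compl : jprod A s a (one - e) = a + s *: st a.
  have [_ ae] := Pa; have [eas _] := Pas.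
  by rewrite /jprod (amul_xcompl mulx1) (amul_complx mul1x) ae eas /= !subr0.
have Phi_b_compl : Phi (b + (one - e)) = Phi b + Phi (one - e).
  by have := add4 _ _ _ _ (P0 _ _) Pb (P0 _ _) Pcompl; rewrite Phi0 !(add0r, addr0).
have Phi_a_as : Phi (a + s *: st a) = Phi a + Phi (s *: st a).
  by have := add4 _ _ _ _ (P0 _ _) Pa Psas (P0 _ _); rewrite Phi0 !(add0r, addr0).
have Phi_ab : Phi (jprod A s a b) = Phi (s *: m b (st a)) + Phi (m a b).
  have := add4 _ _ _ _ Psbas (P0 _ _) Pab (P0 _ _).
  by rewrite Phi0 !(add0r, addr0) addrC; apply.
have split1 : Phi (jprod A s a (b + (one - e))) =
    Phi (jprod A s a b) + Phi (a + s *: st a).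
  by rewrite Phi_jprod Phi_b_compl jprodDr -!Phi_jprod jprod_a_compl.
have split2 : Phi (jprod A s a (b + (one - e))) =
    Phi (s *: m b (st a)) + Phi a + Phi (m a b + s *: st a).
  have := add4 _ _ _ _ Psbas Pa (peirce_atD Pab Psas) (P0 _ _).
  rewrite Phi0 !addr0 => <-; rewrite jprodDr jprod_a_compl /jprod.
  by rewrite (AC (2*2) ((2*3)*(1*4))).
move: split2; rewrite split1 Phi_ab Phi_a_as addrACA => /addrI <-.
by rewrite addrC.
Qed.

End PreservingMap.

Lemma jplus_as_jprod (R : realType) (U W : lmodType R[i]) (A : altStarAlg U)
    (B : altStarAlg W) (Phi : U -> W) :
  preserves_jplus A B Phi ->
  forall a b, Phi (jprod A 1 a b) = jprod B 1 (Phi a) (Phi b).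
Proof. by move=> pres a b; rewrite /jprod !scale1r pres. Qed.

Lemma jminus_as_jprod (R : realType) (U W : lmodType R[i]) (A : altStarAlg U)
    (B : altStarAlg W) (Phi : U -> W) :
  preserves_jminus A B Phi ->
  forall a b, Phi (jprod A (-1) a b) = jprod B (-1) (Phi a) (Phi b).
Proof. by move=> pres a b; rewrite /jprod !scaleN1r pres. Qed.

Lemma conj_i_sign (R : realType) : (-1) * ('i : R[i])^* = 'i.
Proof. by rewrite conjCi mulN1r opprK. Qed.

Lemma i_neq0 (R : realType) : ('i : R[i]) != 0.
Proof. by rewrite eq_complex /= oner_eq0 andbF. Qed.

Theorem claim2p5 (R : realType) (V : completeNormedModType R[i])
  (A : altWfactor V) (W : lmodType R[i]) (B : altStarAlg W)
  (Phi : V -> W) (Phi_bij : bijective Phi)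
  (p1 : V) (p1_proj : is_projection A p1) (p1_neq1 : p1 <> wf_one A)
  (a12 b12 c21 d21 : V)
  (ha12 : peirce A p1 (wf_one A - p1) a12)
  (hb12 : peirce A p1 (wf_one A - p1) b12)
  (hc21 : peirce A (wf_one A - p1) p1 c21)
  (hd21 : peirce A (wf_one A - p1) p1 d21) :
  (preserves_jplus A B Phi ->
     Phi (amul A a12 b12 + astar A a12) = Phi (amul A a12 b12) + Phi (astar A a12) /\
     Phi (amul A c21 d21 + astar A c21) = Phi (amul A c21 d21) + Phi (astar A c21)) /\
  (preserves_jminus A B Phi ->
     Phi (amul A a12 b12 - astar A a12) = Phi (amul A a12 b12) + Phi (- astar A a12) /\
     Phi (amul A c21 d21 - astar A c21) = Phi (amul A c21 d21) + Phi (- astar A c21)).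
Proof.
have [g PhiK gK] := Phi_bij.
have Phi_surj w : exists x, Phi x = w by exists (g w); apply: gK.
have mul1x := wf_mul1l A; have mulx1 := wf_mul1r A.
have [_ st_p1 p1p1] := p1_proj.
have st_p2 := astar_compl mulx1 st_p1; have p2p2 := compl_idem mul1x mulx1 p1p1.
have Pa := peirce_at_offdiag mulx1 p1p1 ha12.
have Pb := peirce_at_offdiag mulx1 p1p1 hb12.
have Pc : peirce_at A (wf_one A - p1) true false c21.
  by apply: (peirce_at_offdiag mulx1 p2p2); rewrite subKr.
have Pd : peirce_at A (wf_one A - p1) true false d21.
  by apply: (peirce_at_offdiag mulx1 p2p2); rewrite subKr.
have key s c : s * c^* = c -> c != 0 ->
    (forall a b, Phi (jprod A s a b) = jprod B s (Phi a) (Phi b)) ->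
    Phi (amul A a12 b12 + s *: astar A a12) =
      Phi (amul A a12 b12) + Phi (s *: astar A a12) /\
    Phi (amul A c21 d21 + s *: astar A c21) =
      Phi (amul A c21 d21) + Phi (s *: astar A c21).
  move=> sc c_neq0 pres; have Phi_inj := can_inj PhiK.
  have main := jprod_offdiag_additive mul1x mulx1 Phi_inj Phi_surj sc c_neq0 pres.
  by split; [exact: main st_p1 p1p1 _ _ Pa Pb | exact: main st_p2 p2p2 _ _ Pc Pd].
split=> pres.
- have sc1 : 1 * (1 : R[i])^* = 1 by rewrite conjC1 mulr1.
  by have := key 1 1 sc1 (oner_neq0 _) (jplus_as_jprod pres); rewrite !scale1r.
- have := key (-1) 'i (conj_i_sign R) (i_neq0 R) (jminus_as_jprod pres).
  by rewrite !scaleN1r.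
Qed.
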